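(* Let $E$ be a Banach lattice. A bounded set $A \subset E$ is almost limited if and only if $T(A)$ is relatively compact in $c_0$ for every disjoint operator $T: E \to c_0$.
   Context: A bounded subset $A$ of a Banach lattice $E$ is almost limited if every disjoint weak* null sequence $(x_n')$ in the dual Banach lattice $E'$ converges uniformly to zero on $A$, i.e. $\sup_{x \in A}|x_n'(x)| \to 0$. Every bounded linear operator $T: E \to c_0$ has the form $T(x) = (x_n'(x))_n$ for a unique weak* null sequence $(x_n') \subset E'$; $T$ is a disjoint operator if $(x_n')$ is disjoint in $E'$. *)

From HB Require Import structures.
From mathcomp Require Import all_boot all_order all_algebra.
From mathcomp Require Import all_classical all_reals all_analysis.
Set Implicit Arguments. Unset Strict Implicit. Unset Printing Implicit Defensive.
Import Order.TTheory GRing.Theory Num.Theory.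
Import numFieldNormedType.Exports.
Local Open Scope classical_set_scope.
Local Open Scope ring_scope.

Section BanachLattice.
Variables (R : realType) (E : completeNormedModType R) (le : E -> E -> Prop).

Definition is_sup2 (x y s : E) : Prop :=
  [/\ le x s, le y s & forall u, le x u -> le y u -> le s u].

Definition is_modulus (x a : E) : Prop := is_sup2 x (- x) a.

Definition banach_lattice : Prop :=
  (forall x, le x x) /\
  (forall x y, le x y -> le y x -> x = y) /\
  (forall x y z, le x y -> le y z -> le x z) /\
  (forall x y z, le x y -> le (x + z) (y + z)) /\
  (forall (a : R) x y, 0 <= a -> le x y -> le (a *: x) (a *: y)) /\
  (forall x y, exists s, is_sup2 x y s) /\
  (forall x y ax ay, is_modulus x ax -> is_modulus y ay -> le ax ay ->
     `|x| <= `|y|).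

Definition dual_elem (f : E -> R) : Prop :=
  (forall (a : R) x y, f (a *: x + y) = a * f x + f y) /\ continuous f.

Definition dual_modulus (f : E -> R) (x : E) : R :=
  sup [set `|f u| | u in [set u | exists au, is_modulus u au /\ le au x]].

(** Disjointness in E': |f| /\ |g| = 0, where the infimum in E' is given by
   the Riesz-Kantorovich formula
   (|f| /\ |g|)(x) = inf { |f|(y) + |g|(x - y) : 0 <= y <= x }, x >= 0. *)
Definition dual_disjoint (f g : E -> R) : Prop :=
  forall x, le 0 x ->
    inf [set dual_modulus f y + dual_modulus g (x - y)
        | y in [set y | le 0 y /\ le y x]] = 0.

Definition disjoint_seq (xs : nat -> E -> R) : Prop :=
  forall n m, n <> m -> dual_disjoint (xs n) (xs m).

Definition weakstar_null (xs : nat -> E -> R) : Prop :=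
  forall x, (fun n => xs n x) @ \oo --> (0 : R).

Definition almost_limited (A : set E) : Prop :=
  bounded_set A /\
  forall xs : nat -> E -> R, (forall n, dual_elem (xs n)) ->
    disjoint_seq xs -> weakstar_null xs ->
    (fun n => sup [set `|xs n x| | x in A]) @ \oo --> (0 : R).

(** The operator T : E -> c0 associated with the weak* null sequence (x'_n):
   T x = (x'_n(x))_n.  Its values are viewed in the space of real sequences
   with the topology of uniform convergence (= sup-norm topology), in which
   c0 is a closed subspace. *)
Definition op_of_seq (xs : nat -> E -> R) (x : E) : {uniform nat -> R} :=
  fun n => xs n x.

End BanachLattice.

From HB Require Import structures.
From mathcomp Require Import all_boot all_order all_algebra.
From mathcomp Require Import all_classical all_reals all_analysis.
From mathcomp Require Import ring lra.
Import Order.TTheory GRing.Theory Num.Theory.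
Import numFieldNormedType.Exports.
Local Open Scope classical_set_scope.
Local Open Scope ring_scope.

(* If the
   coordinates are dominated by b_n -> 0, S lies in the box
   {g | |g_n| <= b_n}, which is compact: it is compact for the product
   topology by Tychonoff, and on it the product and uniform topologies agree
   because beyond some index every coordinate is uniformly small.
   Conversely, a compact set is covered by finitely many uniform
   e-neighbourhoods of elements of c0, whose tails are eventually small. *)

Lemma dual_elem_bounded {R : realType} {E : completeNormedModType R} (f : E -> R)
    (A : set E) :
  dual_elem f -> bounded_set A -> exists M, forall x, A x -> `|f x| <= M.
Proof.
move=> [flin fcont] [r [_ Ar]].
pose fL : {linear E -> R^o} := HB.pack_for {linear E -> R^o} f
  (GRing.isLinear.Build R E R^o *:%R f flin).
have /bounded_funP/(_ (r + 1)) [M fM] : bounded_near fL (nbhs (0 : E)).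
  exact/linear_bounded_continuous.
by exists M => x Ax; apply: fM; apply: Ar Ax; rewrite ltrDl.
Qed.

Section SequenceSpace.
Variable R : realType.
Implicit Types (b : nat -> R) (e : R).

Lemma sup_norm_image_bounds (T : Type) (f : T -> R) (A : set T) (c : R) :
  0 <= c -> (forall x, A x -> `|f x| <= c) ->
  0 <= sup [set `|f x| | x in A] <= c.
Proof.
move=> c0 fc; have [->|/set0P [x Ax]] := eqVneq A set0.
  by rewrite image_set0 sup0 lexx.
have ub : ubound [set `|f x| | x in A] c by move=> _ [y Ay <-]; exact: fc.
apply/andP; split; last by apply: ge_sup ub; exists `|f x|, x.
by apply: le_trans (normr_ge0 (f x)) _; apply: ub_le_sup; [exists c | exists x].
Qed.

Lemma nbhs_uniform_dist (g : {uniform nat -> R}) {e : R} : 0 < e ->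
  nbhs g [set h : {uniform nat -> R} | forall n, `|g n - h n| < e].
Proof.
move=> e0; apply/uniform_nbhs; exists [set gh | ball gh.1 e gh.2]; split.
  exact: (entourage_ball _ (PosNum e0)).
by move=> h gh n; have := gh n I; rewrite /= -ball_normE.
Qed.

Lemma nbhs_ptws_dist (g : {ptws nat -> R}) e (N : nat) : 0 < e ->
  nbhs g [set h : {ptws nat -> R} | forall n, (n < N)%N -> `|g n - h n| < e].
Proof.
move=> e0; elim: N => [|N IH]; first by apply: filterS (@filterT _ _ _) => h _ n.
have gN : nbhs g [set h : {ptws nat -> R} | ball (g N) e (h N)].
  by have := @proj_continuous nat (fun _ => R) N g; apply; exact: nbhsx_ballx.
apply: filterS (filterI IH gN) => h [hlt hN] n.
rewrite ltnS leq_eqVlt => /orP [/eqP -> |]; last exact: hlt.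
by rewrite -ball_normE in hN.
Qed.

Definition dominated b : set {uniform nat -> R} := [set g | forall n, `|g n| <= b n].

Lemma dominated_closed b : closed (dominated b).
Proof.
move=> g gcl n; apply/ler_addgt0Pr => e e0.
have [h [hb /(_ n) ghn]] := gcl _ (nbhs_uniform_dist g e0).
rewrite -[g n](subrK (h n)) addrC.
by apply: le_trans (ler_normD _ _) _; apply: lerD (hb n) (ltW ghn).
Qed.

(* The tail of a dominated sequence is already uniformly small, so only
   finitely many coordinates matter. *)
Lemma dominated_uniform_nbhs b (g : {uniform nat -> R}) (B : set (nat -> R)) :
  b @ \oo --> 0 -> dominated b g -> nbhs g B ->
  exists2 B' : set (nat -> R), nbhs (g : {ptws nat -> R}) B' &
    dominated b `&` B' `<=` B.
Proof.
move=> b0 gb /uniform_nbhs [U [+ UB]]; rewrite -entourage_ballE => -[e /= e0 eU].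
have e20 : 0 < e / 2 by rewrite divr_gt0.
have [N _ bN] := cvgr0_norm_lt _ b0 _ e20.
exists [set h | forall n, (n < N)%N -> `|g n - h n| < e].
  exact: nbhs_ptws_dist.
move=> h [hb gh]; apply: UB => n _; apply: eU; rewrite /= -ball_normE /=.
have [/gh //|Nn] := ltnP n N.
have := bN n Nn; rewrite ger0_norm ?(le_trans _ (gb n)) // => bn.
apply: le_lt_trans (ler_normB _ _) _; apply: le_lt_trans (lerD (gb n) (hb n)) _.
by rewrite [ltRHS]splitr ltrD.
Qed.

Lemma dominated_compact b : b @ \oo --> 0 -> compact (dominated b).
Proof.
move=> b0 F FF Fb.
have ptws_compact :
    compact [set g : {ptws nat -> R} | forall n, `[- b n, b n]%classic (g n)].
  exact: (tychonoff (fun n => @segment_compact R (- b n) (b n))).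
have [|g [gb gcl]] := ptws_compact F FF.
  by apply: filterS Fb => g gb n; rewrite /= in_itv /= -ler_norml.
have {}gb : dominated b g by move=> n; move: (gb n); rewrite /= in_itv /= ler_norml.
exists g; split => // P B FP /(dominated_uniform_nbhs _ _ _ b0 gb) [B' gB' bB'B].
have [h [[Ph hb] B'h]] := gcl _ _ (filterI FP Fb) gB'.
by exists h; split => //; apply: bB'B.
Qed.

Lemma precompact_dominated (T : Type) (A : set T) (u : T -> {uniform nat -> R}) b :
  b @ \oo --> 0 -> (forall x n, A x -> `|u x n| <= b n) ->
  precompact [set u x | x in A].
Proof.
move=> b0 ub; rewrite precompactE.
apply: (@subclosed_compact _ _ (dominated b)).
- exact: closed_closure.
- exact: dominated_compact.
apply: subset_trans (dominated_closed b); apply: closureS.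
by move=> _ [x Ax <-] n; apply: ub.
Qed.

Lemma precompact_sup_cvg0 (T : Type) (A : set T) (u : T -> {uniform nat -> R}) :
  (forall x, A x -> (fun n => u x n) @ \oo --> 0) -> precompact [set u x | x in A] ->
  (fun n => sup [set `|u x n| | x in A]) @ \oo --> 0.
Proof.
move=> u0; rewrite precompactE => /compact_near_coveringP cover.
apply/cvgr0Pnorm_lt => eps eps0; pose e := eps / 4.
have e0 : 0 < e by rewrite divr_gt0.
have tail_small (p : {uniform nat -> R}) : closure [set u x | x in A] p ->
    \forall h \near p & n \near \oo, `|(h : {uniform nat -> R}) n| < e + e + e.
  move=> /(_ _ (nbhs_uniform_dist p e0)) [_ [[x Ax <-] pux]].
  have [N _ uxN] := cvgr0_norm_lt _ (u0 x Ax) _ e0.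
  exists ([set h | forall n, `|p n - h n| < e], [set n | (N <= n)%N]).
    by split; [exact: nbhs_uniform_dist | exists N].
  case=> h n /= [ph Nn].
  have -> : h n = (h n - p n) + (p n - u x n) + u x n by ring.
  rewrite (le_lt_trans (ler_normD _ _)) // ltrD ?uxN //.
  by rewrite (le_lt_trans (ler_normD _ _)) // ltrD // distrC.
have [N _ small] :=
  cover nat \oo (fun n (h : {uniform nat -> R}) => `|h n| < e + e + e) _ tail_small.
exists N => // n /small smalln.
have /andP [sup0 supe] : 0 <= sup [set `|u x n| | x in A] <= e + e + e.
  apply: sup_norm_image_bounds; first by rewrite !addr_ge0 // ltW.
  by move=> x Ax; apply/ltW/smalln/subset_closure; exists x.
by rewrite ger0_norm // (le_lt_trans supe) // /e; lra.
Qed.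

End SequenceSpace.

Theorem mainTheorem6 (R : realType) (E : completeNormedModType R)
    (le : E -> E -> Prop) (HE : banach_lattice le) (A : set E) :
  bounded_set A ->
  (almost_limited le A <->
   forall xs : nat -> E -> R,
     (forall n, dual_elem (xs n)) -> weakstar_null xs -> disjoint_seq le xs ->
     precompact [set op_of_seq xs x | x in A]).
Proof.
move=> bA; split.
  move=> [_ AL] xs dxs wxs disj.
  apply: precompact_dominated; first exact: (AL xs dxs disj wxs).
  move=> x n Ax.
  have [M fM] := dual_elem_bounded (xs n) A (dxs n) bA.
  apply: ub_le_sup; last by exists x.
  by exists M => _ [y Ay <-]; exact: fM.
move=> cpt; split => // xs dxs disj wxs.
by apply: precompact_sup_cvg0 (cpt xs dxs wxs disj) => x _; exact: wxs.
Qed.
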